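(* In the setting described in the context, suppose $T_{\mathrm{renorm}}\ge\ln\!\big(\frac{b_2\|f\|_\infty T_{\mathrm{sel}}}{b_1}\big)(b_2a_0)^{-1}$ and the bounded-flux assumption holds. Then for all $t\in[T^0_1,T^2_M]$ and $j\in\bar J_n$, $s_0-w^j(T^0_1)\Phi^j(t)\ge\delta$.
   Context: Let $I$ be a finite set, $n\in\{1,\dots,|I|\}$, $J_n$ the set of $n$-element subsets of $I$. Input concentrations $x^i\ge0$, $i\in I$, are prescribed functions of time, continuous on $[0,T_{\mathrm{sel}}]$; flux $\Phi^j(t):=\prod_{i\in j}x^i(t)$. Positive constants $a_0,b_1,b_2,s_0,\theta,\rho,T_{\mathrm{sel}},T_{\mathrm{renorm}}$; $f:[0,\infty)\to[0,\infty)$ continuous, $f\equiv0$ on $[0,\theta]$, increasing on $(\theta,\theta+\rho)$, $f\equiv\|f\|_\infty$ on $[\theta+\rho,\infty)$. $\bar J_n$ (assumed nonempty) is the set of $j\in J_n$ such that $\Phi^j>\theta$ on some $[t_0,t_1]\subset[0,T_{\mathrm{sel}}]$ with $t_0<t_1$. $T^0_1:=T_{\mathrm{sel}}+T_{\mathrm{renorm}}$. For $j\in\bar J_n$: $w^j(0)=0$, $\dot w^j=f(\Phi^j)$ on $[0,T_{\mathrm{sel}}]$, $\dot w^j=a_0(b_1-b_2w^j)$ on $[T_{\mathrm{sel}},T^0_1]$, and $w^j$ is constant afterwards (so $x^j(t):=w^j(T^0_1)\Phi^j(t)$ for $t\ge T^0_1$). $T^2_M>T^0_1$ denotes the end of the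 learning phase. Bounded-flux assumption: there is $\alpha>0$ with $\sup_{j\in\bar J_n,\,t\in[T^0_1,T^2_M]}\Phi^j(t)\le\alpha$, and $\delta:=s_0-2\frac{b_1}{b_2}\alpha>0$. *)

From HB Require Import structures.
From mathcomp Require Import all_boot all_order all_algebra.
From mathcomp Require Import all_classical all_reals all_analysis.
Set Implicit Arguments. Unset Strict Implicit. Unset Printing Implicit Defensive.
Import Order.TTheory GRing.Theory Num.Theory.
Import numFieldNormedType.Exports.
Local Open Scope classical_set_scope.
Local Open Scope ring_scope.

Definition Phi (R : realType) (I : finType) (x : I -> R -> R)
  (j : {set I}) (t : R) : R := \prod_(i in j) x i t.

Definition barJ (R : realType) (I : finType) (n : nat) (x : I -> R -> R)
  (theta Tsel : R) : set {set I} :=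
  [set j : {set I} | #|j| = n /\
     exists t0 t1 : R, 0 <= t0 /\ t0 < t1 /\ t1 <= Tsel /\
       (forall t, t0 <= t -> t <= t1 -> theta < Phi x j t)].

From HB Require Import structures.
From mathcomp Require Import all_boot all_order all_algebra.
From mathcomp Require Import all_classical all_reals all_analysis.
From mathcomp Require Import ring lra.
Import Order.TTheory GRing.Theory Num.Theory.
Import numFieldNormedType.Exports.
Local Open Scope classical_set_scope.
Local Open Scope ring_scope.
Set Implicit Arguments.
Unset Strict Implicit.

(* During selection [w' = f (Phi) <= ||f||], so [w (Tsel) <= ||f|| Tsel].
   During renormalization [w] relaxes exponentially to [b1 / b2]:
   [w (T01) - b1 / b2 = (w (Tsel) - b1 / b2) e^(- b2 a0 Trenorm)], and the
   choice of [Trenorm] makes [||f|| Tsel e^(- b2 a0 Trenorm) <= b1 / b2].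
   Hence [w (T01) <= 2 b1 / b2], and the flux bound [Phi <= alpha] does the
   rest. *)

Section RealFunctions.
Variable R : realType.
Implicit Types (f u d : R -> R) (a b c k M : R).

Lemma le_left_limit_of_nondecreasing f a b :
  {for b, continuous f} ->
  (forall y z, a < y -> y < z -> z < b -> f y <= f z) ->
  forall y, a < y -> y < b -> f y <= f b.
Proof.
move=> fb f_nd y ay yb.
apply: (cvgr_to_ge (cvg_at_left_filter fb)).
near=> z.
have yz : y < z by near: z; exact: nbhs_left_gt.
have zb : z < b by near: z; exact: nbhs_left_lt.
exact: f_nd.
Unshelve. all: by end_near. Qed.

Lemma increment_le_of_derive_le u d a b M :
  a < b -> {within `[a, b], continuous u} ->
  (forall t, a < t < b -> is_derive t 1 u (d t)) ->
  (forall t, a < t < b -> d t <= M) ->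
  u b - u a <= M * (b - a).
Proof.
move=> ab uc ud dM.
have [t] := MVT ab (fun t ht => ud t ht) uc.
rewrite in_itv /= => ht ->.
by rewrite ler_pM2r ?subr_gt0 // dM.
Qed.

(* [(u - c) e^{k t}] has zero derivative, hence is constant on [a, b]. *)
Lemma relaxation_solution u k c a b :
  a < b -> {within `[a, b], continuous u} ->
  (forall t, a < t < b -> is_derive t 1 u (k * (c - u t))) ->
  (u b - c) * expR (k * (b - a)) = u a - c.
Proof.
move=> ab uc ud.
pose g := ((u - cst c) * (expR \o (k \*: id))) : R -> R.
have gd t : t \in `]a, b[ -> is_derive t 1 g 0.
  rewrite in_itv /= => ht.
  have de : is_derive t 1 (expR \o (k \*: id)) (expR (k * t) * (k *: 1)).
    exact: is_derive1_comp.
  have du : is_derive t 1 (u - cst c) (k * (c - u t) - 0).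
    by apply: is_deriveB; exact: ud.
  apply: is_derive_eq (is_deriveM du de) _.
  by rewrite /= !fctE /GRing.scale /= subr0 mulr1; ring.
have gc : {within `[a, b], continuous g}.
  move=> t; apply: cvgM; first by apply: cvgB; [exact: uc | exact: cvg_cst].
  apply: continuous_subspaceT => z.
  by apply: differentiable_continuous; apply/derivable1_diffP; exact: ex_derive.
have [t _] := MVT ab gd gc.
rewrite mul0r => /eqP; rewrite subr_eq0 => /eqP.
rewrite /g /= !fctE /GRing.scale /= => gba.
apply: (mulIf (lt0r_neq0 (expR_gt0 (k * a)))).
rewrite -gba -mulrA -expRD; congr (_ * expR _).
by rewrite /GRing.scale /=; ring.
Qed.

Lemma le_expR_of_ln_le X k T :
  0 <= X -> 0 < k -> ln X / k <= T -> X <= expR (k * T).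
Proof.
rewrite le_eqVlt => /predU1P[<- _ _|X0 k0]; first exact: expR_ge0.
rewrite ler_pdivrMr // => lnXT.
by rewrite -[X in X <= _]lnK ?posrE // ler_expR mulrC.
Qed.

Lemma le_plateau_value f theta rho :
  0 <= theta -> 0 < rho -> {within `[0, +oo[, continuous f} ->
  (forall y, 0 <= y -> 0 <= f y) ->
  (forall y, 0 <= y -> y <= theta -> f y = 0) ->
  (forall y z, theta < y -> y < z -> z < theta + rho -> f y <= f z) ->
  (forall y, theta + rho <= y -> f y = f (theta + rho)) ->
  forall y, 0 <= y -> f y <= f (theta + rho).
Proof.
move=> theta_ge0 rho_gt0 fc f_ge0 f_zero f_nd f_plateau y y_ge0.
have thetarho_gt0 : 0 < theta + rho by rewrite ltr_wpDl.
have [y_le|theta_lt] := lerP y theta; first by rewrite f_zero // f_ge0 // ltW.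
have [le_y|y_lt] := lerP (theta + rho) y; first by rewrite f_plateau.
apply: le_left_limit_of_nondecreasing theta_lt y_lt => //.
by move/continuous_within_itvcyP: fc => [+ _]; apply; rewrite in_itv /= andbT.
Qed.

Lemma le_twice_equilibrium u d (F a0 b1 b2 Tsel Trenorm : R) :
  0 < a0 -> 0 < b1 -> 0 < b2 -> 0 < Tsel -> 0 < Trenorm -> 0 <= F ->
  u 0 = 0 -> {within `[0, Tsel + Trenorm], continuous u} ->
  (forall t, 0 < t < Tsel -> is_derive t 1 u (d t)) ->
  (forall t, 0 < t < Tsel -> d t <= F) ->
  (forall t, Tsel < t < Tsel + Trenorm ->
     is_derive t 1 u (a0 * (b1 - b2 * u t))) ->
  ln (b2 * F * Tsel / b1) / (b2 * a0) <= Trenorm ->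
  u (Tsel + Trenorm) <= 2 * (b1 / b2).
Proof.
move=> a0_gt0 b1_gt0 b2_gt0 Tsel_gt0 Tren_gt0 F_ge0 u0 uc u_sel d_le u_ren Tren_ge.
set c := b1 / b2; set k := b2 * a0.
have c_gt0 : 0 < c by rewrite divr_gt0.
have Tsel_lt : Tsel < Tsel + Trenorm by rewrite ltrDl.
have u_Tsel : u Tsel <= F * Tsel.
  have := increment_le_of_derive_le Tsel_gt0 _ u_sel d_le.
  rewrite u0 !subr0; apply.
  by apply: continuous_subspaceW uc; apply: subset_itvl; rewrite bnd_simp ltW.
have u_T01 : (u (Tsel + Trenorm) - c) * expR (k * Trenorm) = u Tsel - c.
  have -> : k * Trenorm = k * (Tsel + Trenorm - Tsel) by congr (_ * _); ring.
  apply: relaxation_solution Tsel_lt _ _.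
    by apply: continuous_subspaceW uc; apply: subset_itvr; rewrite bnd_simp ltW.
  move=> t /u_ren; congr is_derive.
  by rewrite /c /k; field; rewrite lt0r_neq0.
have F_Tsel : F * Tsel <= c * expR (k * Trenorm).
  have -> : F * Tsel = b2 * F * Tsel / b1 * c.
    by rewrite /c; field; rewrite !lt0r_neq0.
  rewrite mulrC ler_pM2l ?divr_gt0 //.
  apply: le_expR_of_ln_le Tren_ge; last exact: mulr_gt0.
  by rewrite divr_ge0 ?mulr_ge0 // ltW.
suff : u (Tsel + Trenorm) - c <= c by lra.
rewrite -(ler_pM2r (expR_gt0 (k * Trenorm))) u_T01.
by apply: le_trans (le_trans u_Tsel F_Tsel); rewrite gerBl ltW.
Qed.

End RealFunctions.

Theorem proposition18 (R : realType) (I : finType) (n : nat)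
  (x : I -> R -> R) (f : R -> R) (w : {set I} -> R -> R)
  (a0 b1 b2 s0 theta rho Tsel Trenorm T2M alpha : R) :
  (1 <= n <= #|I|)%N ->
  0 < a0 -> 0 < b1 -> 0 < b2 -> 0 < s0 -> 0 < theta -> 0 < rho ->
  0 < Tsel -> 0 < Trenorm ->
  (* inputs: nonnegative, continuous on [0,Tsel] *)
  (forall i t, 0 <= x i t) ->
  (forall i, {within `[0, Tsel], continuous (x i)}) ->
  (* f : [0,oo) -> [0,oo), continuous, 0 on [0,theta], strictly increasing
     on (theta, theta+rho), equal to its sup norm ||f||_oo = f(theta+rho)
     on [theta+rho, oo) *)
  {within `[0, +oo[, continuous f} ->
  (forall y, 0 <= y -> 0 <= f y) ->
  (forall y, 0 <= y -> y <= theta -> f y = 0) ->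
  (forall y z, theta < y -> y < z -> z < theta + rho -> f y < f z) ->
  (forall y, theta + rho <= y -> f y = f (theta + rho)) ->
  (* \bar J_n nonempty *)
  barJ n x theta Tsel !=set0 ->
  (* w^j : w(0)=0, dw/dt = f(Phi^j) on [0,Tsel],
     dw/dt = a0 (b1 - b2 w) on [Tsel, T01], with T01 = Tsel + Trenorm *)
  (forall j, barJ n x theta Tsel j ->
     [/\ w j 0 = 0,
         {within `[0, Tsel + Trenorm], continuous (w j)},
         (forall t, 0 < t < Tsel ->
            is_derive t 1 (w j) (f (Phi x j t))) &
         (forall t, Tsel < t < Tsel + Trenorm ->
            is_derive t 1 (w j) (a0 * (b1 - b2 * w j t)))]) ->
  Tsel + Trenorm < T2M ->
  (* renormalization time hypothesis *)
  ln (b2 * f (theta + rho) * Tsel / b1) / (b2 * a0) <= Trenorm ->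
  (* bounded-flux assumption *)
  0 < alpha ->
  (forall j t, barJ n x theta Tsel j -> Tsel + Trenorm <= t <= T2M ->
     Phi x j t <= alpha) ->
  0 < s0 - 2 * (b1 / b2) * alpha ->
  forall j t, barJ n x theta Tsel j -> Tsel + Trenorm <= t <= T2M ->
    s0 - 2 * (b1 / b2) * alpha <= s0 - w j (Tsel + Trenorm) * Phi x j t.
Proof.
move=> _ a0_gt0 b1_gt0 b2_gt0 _ theta_gt0 rho_gt0 Tsel_gt0 Tren_gt0 x_ge0 _
  fc f_ge0 f_zero f_incr f_plateau _ w_sol _ Tren_ge _ Phi_le _ j t jJ tI.
have [w0 wc w_sel w_ren] := w_sol j jJ.
have Phi_ge0 s : 0 <= Phi x j s by apply: prodr_ge0.
have f_le y : 0 <= y -> f y <= f (theta + rho).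
  apply: le_plateau_value => //; first exact: ltW.
  by move=> ? ? ? ? ?; apply/ltW/f_incr.
have w_le : w j (Tsel + Trenorm) <= 2 * (b1 / b2).
  apply: (le_twice_equilibrium a0_gt0 b1_gt0 b2_gt0 Tsel_gt0 Tren_gt0 _
    w0 wc w_sel _ w_ren Tren_ge).
  - by rewrite f_ge0 // addr_ge0 ?ltW.
  - by move=> s _; apply: f_le.
rewrite lerD2l lerN2; apply: le_trans (ler_wpM2r (Phi_ge0 t) w_le) _.
by apply: ler_wpM2l (Phi_le j t jJ tI); rewrite mulr_ge0 ?divr_ge0 ?ltW.
Qed.
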